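(* Let $\rho\le\frac{1}{100}$ be a sufficiently small constant. For (sufficiently large) $n$, there is no algorithm which, given the outcomes of the experiments $Q(a,b,c)$ on all $\binom{n}{3}$ triples of leaves generated according to the homogeneous noise model, reconstructs the topology of every rooted edge-weighted full binary tree $T$ with $n$ leaves, all root-to-leaf paths of weight $1$, and all edge weights at least $\frac{\rho}{\sqrt{n}}$. More precisely, there are two such trees with distinct topologies whose joint distributions of the outcomes of all $\binom{n}{3}$ experiments have total variation distance at most $0.01$, so no algorithm can distinguish them with probability more than $0.51$. Since the homogeneous model is an instance of the general noise model, the same impossibility holds for the general noise model.
   Context: Let $d$ be the weighted path distance between leaves of $T$ (an ultrametric). For every unordered triple of distinct leaves $\{a,b,c\}$ a single experiment $Q(a,b,c)$ is performed, returning one of the pairs $(a,b)$, $(b,c)$, $(a,c)$; outcomes on distinct triples are mutually independent. Homogeneous noise model: $\Pr[Q(a,b,c)=(a,b)]=\frac{d(a,c)+d(b,c)}{2(d(a,b)+d(b,c)+d(a,c))}$, symmetrically for the other pairs. General noise model: for a triple with closest-pair distance $d_1$ and other distance $d_2\ge d_1$, the closest pair is returned with probability $p_{\mathrm{correct}}(d_1,d_2)$ and each other pair with probability $p_{\mathrm{incorrect}}(d_1,d_2)$, where $p_{\mathrm{correct}}+2p_{\mathrm{incorrect}}=1$, $p_{\mathrm{correct}}>p_{\mathrm{incorrect}}$, and $\partial p_{\mathrm{correct}}/\partial d_1\le-\varepsilon$ for $0<d_1<d_2$ for some constant $\varepsilon>0$. The topology of $T$ is the underlying rooted unweighted tree with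 labelled leaves. *)

From HB Require Import structures.
From mathcomp Require Import all_boot all_order all_algebra.
From mathcomp Require Import reals.
Set Implicit Arguments. Unset Strict Implicit. Unset Printing Implicit Defensive.
Import Order.TTheory GRing.Theory Num.Theory.
Local Open Scope ring_scope.

(* Rooted edge-weighted full binary trees with leaves labelled by nats.
   [Node wl l wr r] : an internal node with exactly two children [l] and [r];
   [wl] (resp. [wr]) is the weight of the edge to [l] (resp. [r]). *)
Inductive wtree (R : Type) : Type :=
  | Leaf of nat
  | Node of R & wtree R & R & wtree R.
Arguments Leaf {R}.

Section Trees.
Variable R : realType.

Fixpoint leaves (t : wtree R) : seq nat :=
  match t with
  | Leaf i => [:: i]
  | Node _ l _ r => leaves l ++ leaves r
  end.

Fixpoint depth (t : wtree R) (a : nat) : R :=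
  match t with
  | Leaf _ => 0
  | Node wl l wr r => if a \in leaves l then wl + depth l a else wr + depth r a
  end.

Fixpoint dist (t : wtree R) (a b : nat) : R :=
  match t with
  | Leaf _ => 0
  | Node wl l wr r =>
      if (a \in leaves l) && (b \in leaves l) then dist l a b
      else if (a \in leaves r) && (b \in leaves r) then dist r a b
      else depth t a + depth t b
  end.

Fixpoint weights_ge (t : wtree R) (c : R) : Prop :=
  match t with
  | Leaf _ => True
  | Node wl l wr r => [/\ c <= wl, c <= wr, weights_ge l c & weights_ge r c]
  end.

Definition admissible (n : nat) (rho : R) (t : wtree R) : Prop :=
  [/\ perm_eq (leaves t) (iota 0 n),
      weights_ge t (rho / Num.sqrt (n%:R))
    & forall a, a \in leaves t -> depth t a = 1].

Fixpoint same_topo (t1 t2 : wtree R) : Prop :=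
  match t1, t2 with
  | Leaf i, Leaf j => i = j
  | Node _ l1 _ r1, Node _ l2 _ r2 =>
      (same_topo l1 l2 /\ same_topo r1 r2) \/ (same_topo l1 r2 /\ same_topo r1 l2)
  | _, _ => False
  end.

(* unordered triples of distinct leaves, represented as a < b < c *)
Definition triple (n : nat) := {x : 'I_n * 'I_n * 'I_n | (x.1.1 < x.1.2 < x.2)%N}.

(* outcomes of all experiments: for each triple (a,b,c), 0 stands for the
   pair (a,b), 1 for (b,c), 2 for (a,c) *)
Definition outcome (n : nat) := {ffun triple n -> 'I_3}.

(* homogeneous noise model: probability that Q(a,b,c) returns pair k *)
Definition qprob (t : wtree R) (n : nat) (x : triple n) (k : 'I_3) : R :=
  let a := nat_of_ord (val x).1.1 in
  let b := nat_of_ord (val x).1.2 in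
  let c := nat_of_ord (val x).2 in
  let S := dist t a b + dist t b c + dist t a c in
  if val k == 0%N then (dist t a c + dist t b c) / (2 * S)
  else if val k == 1%N then (dist t a b + dist t a c) / (2 * S)
  else (dist t a b + dist t b c) / (2 * S).

Definition joint (t : wtree R) (n : nat) (w : outcome n) : R :=
  \prod_(x : triple n) qprob t x (w x).

Definition tv (n : nat) (t1 t2 : wtree R) : R :=
  2^-1 * \sum_(w : outcome n) `|joint t1 w - joint t2 w|.

Definition prob_answer (n : nat) (t : wtree R) (f : outcome n -> bool) (b : bool) : R :=
  \sum_(w : outcome n | f w == b) joint t w.

End Trees.

(* Let T1 and T2 differ only in whether leaf 0 forms a cherry with leaf 1 or with
   leaf 2, the cherry edge having the minimal admissible weight c = rho / sqrt n.
   The two trees then induce the same law on every triple except the at most 2n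
   triples containing 0 and one of 1, 2, and on those the chi-square divergence is
   at most c^2.  Since 1 + chi2 is multiplicative over independent experiments, the
   joint laws are at chi-square divergence at most 2 * 2n * c^2 = 4 rho^2, hence
   (Cauchy-Schwarz) at small L1 distance.  The other n - 3 leaves hang from a
   balanced subtree of height k = O(log n); it fits below weight 1/2 with all
   edges at least c because k c = O(rho). *)

From HB Require Import structures.
From mathcomp Require Import all_boot all_order all_algebra.
From mathcomp Require Import reals.
From mathcomp Require Import zify ring lra.
Set Implicit Arguments. Unset Strict Implicit. Unset Printing Implicit Defensive.
Import Order.TTheory GRing.Theory Num.Theory.
Local Open Scope ring_scope.

Section ChiSquare.
Variable R : realType.

Definition chi2 (T : finType) (p q : T -> R) : R :=
  \sum_x (p x - q x) ^+ 2 / q x.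

Lemma chi2_ge0 (T : finType) (p q : T -> R) : (forall x, 0 < q x) -> 0 <= chi2 p q.
Proof.
by move=> q0; apply: sumr_ge0 => x _; apply: divr_ge0; [exact: sqr_ge0 | exact: ltW].
Qed.

Lemma chi2_id (T : finType) (p : T -> R) : chi2 p p = 0.
Proof. by apply: big1 => x _; rewrite subrr expr0n mul0r. Qed.

Lemma sum_sqr_div_chi2 (T : finType) (p q : T -> R) :
  (forall x, 0 < q x) -> \sum_x p x = 1 -> \sum_x q x = 1 ->
  \sum_x p x ^+ 2 / q x = 1 + chi2 p q.
Proof.
move=> q0 sp sq.
have -> : chi2 p q = \sum_x (p x ^+ 2 / q x - 2 * p x + q x).
  by apply: eq_bigr => x _; field; rewrite gt_eqF.
by rewrite !big_split /= sumrN -big_distrr /= sp sq; ring.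
Qed.

Lemma sum_ffun_prod_eq1 (I J : finType) (p : I -> J -> R) :
  (forall i, \sum_j p i j = 1) -> \sum_(w : {ffun I -> J}) \prod_i p i (w i) = 1.
Proof. by move=> p1; rewrite -bigA_distr_bigA (eq_bigr (fun=> 1)) ?big1_eq. Qed.

Lemma prod1D_le (I : Type) (r : seq I) (e : I -> R) :
  (forall i, 0 <= e i) -> \sum_(i <- r) e i <= 2^-1 ->
  \prod_(i <- r) (1 + e i) <= 1 + 2 * \sum_(i <- r) e i.
Proof.
move=> e0; elim: r => [|x r IH]; first by rewrite !big_nil; lra.
rewrite !big_cons => small; have ex := e0 x.
have {}IH : \prod_(i <- r) (1 + e i) <= 1 + 2 * \sum_(i <- r) e i by apply: IH; lra.
have p0 : 0 <= \prod_(i <- r) (1 + e i) by apply: prodr_ge0 => i _; have := e0 i; lra.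
have h : (1 + e x) * \prod_(i <- r) (1 + e i) <= (1 + e x) * (1 + 2 * \sum_(i <- r) e i).
  by rewrite ler_wpM2l //; lra.
have : 0 <= e x * (2^-1 - \sum_(i <- r) e i) by apply: mulr_ge0; lra.
nra.
Qed.

Lemma normr_le_AMGM (a q l : R) : 0 < q -> 0 < l ->
  `|a| <= l * a ^+ 2 / q + q / (4 * l).
Proof.
move=> q0 l0; rewrite -[a ^+ 2]real_normK ?num_real //.
have : 0 <= (2 * l * `|a| - q) ^+ 2 / (4 * l * q).
  by apply: divr_ge0; [exact: sqr_ge0 | rewrite !mulr_ge0 // ltW].
have -> : (2 * l * `|a| - q) ^+ 2 / (4 * l * q) = l * `|a| ^+ 2 / q + q / (4 * l) - `|a|.
  by field; rewrite !gt_eqF.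
by rewrite subr_ge0.
Qed.

Lemma sum_normB_le_chi2 (T : finType) (p q : T -> R) (l : R) :
  (forall x, 0 < q x) -> 0 < l ->
  \sum_x `|p x - q x| <= l * chi2 p q + (\sum_x q x) / (4 * l).
Proof.
move=> q0 l0; rewrite /chi2 big_distrr big_distrl -big_split /=.
by apply: ler_sum => x _; rewrite mulrA; apply: normr_le_AMGM.
Qed.

Lemma sum_test_le (T : finType) (p q : T -> R) (f : T -> bool) :
  \sum_(x | f x == true) p x + \sum_(x | f x == false) q x <=
  \sum_x q x + \sum_x `|p x - q x|.
Proof.
have splitT (g : T -> R) :
    \sum_x g x = \sum_(x | f x == true) g x + \sum_(x | f x == false) g x.
  by rewrite (bigID (fun x => f x == true)); congr (_ + _); apply: eq_bigl => x; case: (f x).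
rewrite !splitT.
have : \sum_(x | f x == true) (p x - q x) <= \sum_(x | f x == true) `|p x - q x|.
  by apply: ler_sum => x _; apply: ler_norm.
rewrite sumrB.
have : 0 <= \sum_(x | f x == false) `|p x - q x| by apply: sumr_ge0.
lra.
Qed.

Section Product.
Variables (I J : finType) (p q : I -> J -> R).
Hypotheses (q_gt0 : forall i j, 0 < q i j)
  (p_sum1 : forall i, \sum_j p i j = 1) (q_sum1 : forall i, \sum_j q i j = 1).

Let P : {ffun I -> J} -> R := fun w => \prod_i p i (w i).
Let Q : {ffun I -> J} -> R := fun w => \prod_i q i (w i).

Lemma chi2_ffun_prod : 1 + chi2 P Q = \prod_i (1 + chi2 (p i) (q i)).
Proof.
rewrite -sum_sqr_div_chi2 ?sum_ffun_prod_eq1 //; last by move=> w; apply: prodr_gt0.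
rewrite (eq_bigr (fun i => \sum_j p i j ^+ 2 / q i j)); last first.
  by move=> i _; rewrite sum_sqr_div_chi2.
rewrite bigA_distr_bigA; apply: eq_bigr => w _.
by rewrite /P /Q -prodrXl -prodfV -big_split.
Qed.

Lemma chi2_ffun_prod_le :
  \sum_i chi2 (p i) (q i) <= 2^-1 -> chi2 P Q <= 2 * \sum_i chi2 (p i) (q i).
Proof.
move=> small; have := prod1D_le (fun i => chi2_ge0 (p i) (q_gt0 i)) small.
by rewrite -chi2_ffun_prod lerD2l.
Qed.

End Product.
End ChiSquare.

Lemma half_bounds m k : (2 <= m)%N -> (m <= 2 ^ k.+1)%N ->
  [/\ (1 <= m./2 <= 2 ^ k)%N, (1 <= m - m./2 <= 2 ^ k)%N & (m./2 + (m - m./2) = m)%N].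
Proof. by rewrite expnS -!divn2 => *; split; lia. Qed.

Section Trees.
Variable R : realType.
Implicit Types (t l r : wtree R) (c H : R).

Lemma depth_ge0 t c a : 0 <= c -> weights_ge t c -> 0 <= depth t a.
Proof.
move=> c0; elim: t => [i|wl l IHl wr r IHr] //= [cl cr wgl wgr].
by case: ifP => _; [have := IHl wgl | have := IHr wgr]; lra.
Qed.

Lemma dist_gt0 t c a b : 0 < c -> weights_ge t c ->
  a != b -> a \in leaves t -> b \in leaves t -> 0 < dist t a b.
Proof.
move=> c0; elim: t => [i|wl l IHl wr r IHr] /=.
  by move=> _ ab; rewrite !inE => /eqP ha /eqP hb; rewrite ha hb eqxx in ab.
move=> [cl cr wgl wgr] ab ha hb.
case: ifP => [/andP[]|_]; first exact: IHl.
case: ifP => [/andP[]|_]; first exact: IHr.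
have := depth_ge0 a (ltW c0) wgl; have := depth_ge0 a (ltW c0) wgr.
have := depth_ge0 b (ltW c0) wgl; have := depth_ge0 b (ltW c0) wgr.
by case: ifP => _; case: ifP => _; lra.
Qed.

Lemma same_topo_perm_eq t1 t2 : same_topo t1 t2 -> perm_eq (leaves t1) (leaves t2).
Proof.
elim: t1 t2 => [i|w1 l1 IHl w2 r1 IHr] [j|w1' l2 w2' r2] //=; first by move->.
case=> [[ll rr]|[lr rl]]; first by rewrite perm_cat ?IHl ?IHr.
by rewrite perm_catC perm_cat ?IHl ?IHr.
Qed.

Lemma dist_Node_l wl l wr r a b : a \in leaves l -> b \in leaves l ->
  dist (Node wl l wr r) a b = dist l a b.
Proof. by move=> /= -> ->. Qed.

Lemma dist_Node_r wl l wr r a b : a \notin leaves l -> a \in leaves r -> b \in leaves r ->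
  dist (Node wl l wr r) a b = dist r a b.
Proof. by move=> /= /negbTE -> -> ->. Qed.

Lemma dist_Node_cross wl l wr r a b : a \notin leaves l -> b \notin leaves r ->
  dist (Node wl l wr r) a b = depth (Node wl l wr r) a + depth (Node wl l wr r) b.
Proof. by move=> /negbTE al /negbTE br /=; rewrite al br andbF. Qed.

(* For m <= 2 ^ k, [bal_tree c k s m H] has leaves s, ..., s + m - 1, all at depth H:
   inner edges weigh c and each leaf edge takes up the remaining height. *)
Definition bal_edge c m H : R := if (m <= 1)%N then H else c.

Fixpoint bal_tree c k s m H : wtree R :=
  match k with
  | 0%N => Leaf s
  | k'.+1 =>
      if (m <= 1)%N then Leaf s else
      Node (bal_edge c m./2 H) (bal_tree c k' s m./2 (H - bal_edge c m./2 H))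
           (bal_edge c (m - m./2)%N H)
           (bal_tree c k' (s + m./2)%N (m - m./2)%N (H - bal_edge c (m - m./2)%N H))
  end.

Lemma bal_tree_small c k s m H : (m <= 1)%N -> bal_tree c k s m H = Leaf s.
Proof. by case: k => [|k] //= ->. Qed.

Lemma leaves_bal_tree c k s m H : (1 <= m <= 2 ^ k)%N -> leaves (bal_tree c k s m H) = iota s m.
Proof.
elim: k s m H => [|k IH] s m H /andP[m1 mk].
  by have -> : m = 1%N by rewrite expn0 in mk; lia.
rewrite /=; case: leqP => m2; first by have -> : m = 1%N by lia.
have [hl hr hm] := half_bounds m2 mk.
by rewrite /= !IH // -iotaD hm.
Qed.

Lemma leaves_bal_tree_geq c k s m H a : a \in leaves (bal_tree c k s m H) -> (s <= a)%N.
Proof.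
elim: k s m H => [|k IH] s m H /=; first by rewrite inE => /eqP->.
case: ifP => _ /=; first by rewrite inE => /eqP->.
by rewrite mem_cat => /orP[/IH //|/IH]; lia.
Qed.

Lemma depth_bal_tree c k s m H a : (2 <= m <= 2 ^ k)%N -> depth (bal_tree c k s m H) a = H.
Proof.
elim: k s m H => [|k IH] s m H /andP[m2 mk]; first by rewrite expn0 in mk; lia.
rewrite /=; case: leqP => m1; first lia.
have [hl hr _] := half_bounds m2 mk.
suff sub : forall m' s', (1 <= m' <= 2 ^ k)%N ->
    bal_edge c m' H + depth (bal_tree c k s' m' (H - bal_edge c m' H)) a = H.
  by rewrite /=; case: ifP => _; apply: sub.
move=> m' s' /andP[m'1 m'k]; rewrite /bal_edge; case: ifP => m'2.
  by rewrite bal_tree_small //= addr0.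
by rewrite IH ?m'k ?andbT; [rewrite addrC subrK | lia].
Qed.

Lemma weights_ge_bal_tree c k s m H : 0 <= c -> k%:R * c <= H -> (m <= 2 ^ k)%N ->
  weights_ge (bal_tree c k s m H) c.
Proof.
elim: k s m H => [|k IH] s m H c0 kc mk //=.
case: leqP => m1 //; have [/andP[_ hl] /andP[_ hr] _] := half_bounds m1 mk.
have cH : c <= H by apply: le_trans kc; rewrite -[X in X <= _]mul1r ler_wpM2r // ler1n.
suff sub : forall m' s', (m' <= 2 ^ k)%N ->
    c <= bal_edge c m' H /\ weights_ge (bal_tree c k s' m' (H - bal_edge c m' H)) c.
  by have [? ?] := sub _ s hl; have [? ?] := sub _ (s + m./2)%N hr.
move=> m' s' m'k; rewrite /bal_edge; case: ifP => m'2; first by rewrite bal_tree_small.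
split => //; apply: IH => //.
by rewrite lerBrDl; move: kc; rewrite -natr1 mulrDl mul1r addrC.
Qed.

End Trees.

Section TripleLaw.
Variable R : realType.
Implicit Types A B C : R.

Definition triple_law A B C (k : 'I_3) : R :=
  let S := A + B + C in
  if val k == 0%N then (C + B) / (2 * S)
  else if val k == 1%N then (A + C) / (2 * S)
  else (A + B) / (2 * S).

Lemma qprobE (t : wtree R) n (x : triple n) :
  qprob t x = triple_law (dist t (val x).1.1 (val x).1.2) (dist t (val x).1.2 (val x).2)
                         (dist t (val x).1.1 (val x).2).
Proof. by []. Qed.

Lemma triple_law_sum1 A B C : A + B + C != 0 -> \sum_k triple_law A B C k = 1.
Proof.
move=> S0; rewrite !big_ord_recl big_ord0 /triple_law /=.
by field; move: S0; apply: contra => /eqP S0; apply/eqP; lra.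
Qed.

Lemma triple_law_gt0 A B C k : 0 < A -> 0 < B -> 0 < C -> 0 < triple_law A B C k.
Proof. by move=> *; rewrite /triple_law; do 2?case: ifP => _; apply: divr_gt0; lra. Qed.

Lemma chi2_triple_lawE A1 B1 C1 A2 B2 C2 :
  let S1 := 2 * (A1 + B1 + C1) in let S2 := 2 * (A2 + B2 + C2) in
  chi2 (triple_law A1 B1 C1) (triple_law A2 B2 C2) =
    ((C1 + B1) / S1 - (C2 + B2) / S2) ^+ 2 / ((C2 + B2) / S2)
  + ((A1 + C1) / S1 - (A2 + C2) / S2) ^+ 2 / ((A2 + C2) / S2)
  + ((A1 + B1) / S1 - (A2 + B2) / S2) ^+ 2 / ((A2 + B2) / S2).
Proof. by rewrite /chi2 !big_ord_recl big_ord0 /triple_law /= addr0 addrA. Qed.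

Lemma chi2_triple_law_shorten (c : R) : 0 <= c -> 4 * c <= 1 ->
  chi2 (triple_law (1 - 2 * c) 2 2) (triple_law 1 2 2) <= c ^+ 2.
Proof.
move=> c0 c4; have -> : chi2 (triple_law (1 - 2 * c) 2 2) (triple_law 1 2 2) =
                        c ^+ 2 * (8 / (3 * (5 - 2 * c) ^+ 2)).
  by rewrite chi2_triple_lawE; field; do ?[apply/andP; split]; apply/eqP; lra.
by apply: ler_piMr; [exact: sqr_ge0 | rewrite ler_pdivrMr ?mul1r; nra].
Qed.

Lemma chi2_triple_law_lengthen (c : R) : 0 <= c -> 4 * c <= 1 ->
  chi2 (triple_law 1 2 2) (triple_law (1 - 2 * c) 2 2) <= c ^+ 2.
Proof.
move=> c0 c4; have -> : chi2 (triple_law 1 2 2) (triple_law (1 - 2 * c) 2 2) =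
                        c ^+ 2 * (8 / (25 * (3 - 2 * c))).
  by rewrite chi2_triple_lawE; field; do ?[apply/andP; split]; apply/eqP; lra.
by apply: ler_piMr; [exact: sqr_ge0 | rewrite ler_pdivrMr ?mul1r; nra].
Qed.

Lemma chi2_triple_law_swap (c : R) : 0 <= c -> 4 * c <= 1 ->
  chi2 (triple_law (1 - 2 * c) 1 1) (triple_law 1 1 (1 - 2 * c)) <= c ^+ 2.
Proof.
move=> c0 c4; have -> : chi2 (triple_law (1 - 2 * c) 1 1) (triple_law 1 1 (1 - 2 * c)) =
                        c ^+ 2 * ((2 - c) / ((1 - c) * (3 - 2 * c))).
  by rewrite chi2_triple_lawE; field; do ?[apply/andP; split]; apply/eqP; lra.
by apply: ler_piMr; [exact: sqr_ge0 | rewrite ler_pdivrMr ?mul1r; nra].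
Qed.

End TripleLaw.

Section TreeLaw.
Variables (R : realType) (n : nat) (c : R) (t : wtree R).
Hypotheses (c_gt0 : 0 < c) (t_weights : weights_ge t c)
  (t_leaves : perm_eq (leaves t) (iota 0 n)).

Lemma dist_triple_gt0 (x : triple n) :
  [/\ 0 < dist t (val x).1.1 (val x).1.2, 0 < dist t (val x).1.2 (val x).2
    & 0 < dist t (val x).1.1 (val x).2].
Proof.
have leaf (i : 'I_n) : nat_of_ord i \in leaves t.
  by rewrite (perm_mem t_leaves) mem_iota /= add0n ltn_ord.
have /= ord_x := valP x.
by split; apply: (dist_gt0 c_gt0 t_weights) => //; apply/eqP; lia.
Qed.

Lemma qprob_gt0 (x : triple n) k : 0 < qprob t x k.
Proof. by have [? ? ?] := dist_triple_gt0 x; rewrite qprobE triple_law_gt0. Qed.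

Lemma qprob_sum1 (x : triple n) : \sum_k qprob t x k = 1.
Proof.
have [? ? ?] := dist_triple_gt0 x.
by rewrite qprobE triple_law_sum1 // gt_eqF // !addr_gt0.
Qed.

Lemma sum_joint1 : \sum_(w : outcome n) joint t w = 1.
Proof. exact: sum_ffun_prod_eq1 qprob_sum1. Qed.

End TreeLaw.

Lemma sum_normB_joint_le (R : realType) n (c s : R) (t1 t2 : wtree R) : 0 < c ->
  weights_ge t1 c -> perm_eq (leaves t1) (iota 0 n) ->
  weights_ge t2 c -> perm_eq (leaves t2) (iota 0 n) ->
  \sum_(x : triple n) chi2 (qprob t1 x) (qprob t2 x) <= s -> s <= 2^-1 ->
  \sum_(w : outcome n) `|joint t1 w - joint t2 w| <= 50 * s + 1 / 100.
Proof.
move=> c0 w1 l1 w2 l2 chi_s s_small.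
have q_gt0 := qprob_gt0 c0 w2 l2.
have chi_joint : chi2 (@joint _ t1 n) (@joint _ t2 n) <= 2 * s.
  apply: le_trans (chi2_ffun_prod_le q_gt0 (qprob_sum1 c0 w1 l1) (qprob_sum1 c0 w2 l2)
                     (le_trans chi_s s_small)) _.
  by rewrite ler_pM2l.
have joint_gt0 w : 0 < @joint _ t2 n w by apply: prodr_gt0 => x _; apply: q_gt0.
have l0 : (0 : R) < 25 by [].
have := sum_normB_le_chi2 (@joint _ t1 n) joint_gt0 l0.
rewrite (sum_joint1 c0 w2 l2); lra.
Qed.

Section HardInstance.
Variables (R : realType) (c : R) (k n : nat).

Definition cherry (i j : nat) : wtree R :=
  Node c (Node (2^-1 - c) (Leaf 0) (2^-1 - c) (Leaf i)) 2^-1 (Leaf j).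

Lemma leaves_cherry i j : leaves (cherry i j) = [:: 0%N; i; j].
Proof. by []. Qed.

Definition hard_tree (i j : nat) : wtree R :=
  Node 2^-1 (bal_tree c k 3 (n - 3) 2^-1) 2^-1 (cherry i j).

Lemma leaves_hard_tree i j : (1 <= n - 3 <= 2 ^ k)%N ->
  perm_eq [:: 0%N; i; j] [:: 0%N; 1%N; 2%N] ->
  perm_eq (leaves (hard_tree i j)) (iota 0 n).
Proof.
move=> nk ij; rewrite /hard_tree /= leaves_bal_tree // perm_catC.
have -> : iota 0 n = iota 0 3 ++ iota 3 (n - 3) by rewrite -iotaD subnKC //; lia.
by rewrite perm_cat2r.
Qed.

Lemma weights_ge_hard_tree i j : 0 <= c -> 4 * c <= 1 -> k%:R * c <= 2^-1 ->
  (n - 3 <= 2 ^ k)%N -> weights_ge (hard_tree i j) c.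
Proof.
move=> c0 c4 kc nk; do !split => //; try lra.
exact: weights_ge_bal_tree.
Qed.

Lemma depth_hard_tree i j a : (2 <= n - 3 <= 2 ^ k)%N -> depth (hard_tree i j) a = 1.
Proof.
move=> nk; rewrite /hard_tree /=; case: ifP => _; first by rewrite depth_bal_tree //; lra.
by rewrite /cherry /=; do 2?case: ifP => _; lra.
Qed.

Lemma hard_trees_topo : ~ same_topo (hard_tree 1 2) (hard_tree 2 1).
Proof.
case=> [[_ /=]|[/same_topo_perm_eq same_leaves _]]; first by rewrite /cherry /=; lia.
have := perm_mem same_leaves 0%N; rewrite leaves_cherry inE eqxx /=.
by case: (boolP (0%N \in _)) => // /leaves_bal_tree_geq.
Qed.

Lemma dist_hard_tree_bulk i j u v : (1 <= n - 3 <= 2 ^ k)%N ->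
  (3 <= u < n)%N -> (3 <= v < n)%N ->
  dist (hard_tree i j) u v = dist (bal_tree c k 3 (n - 3) 2^-1) u v.
Proof.
by move=> nk u3 v3; apply: dist_Node_l; rewrite leaves_bal_tree // mem_iota; lia.
Qed.

Section SmallLeaves.
Variables (i j u v : nat).
Hypotheses (nk : (2 <= n - 3 <= 2 ^ k)%N) (ij : perm_eq [:: 0%N; i; j] [:: 0%N; 1%N; 2%N])
  (u3 : (u < 3)%N).

Let cherry_leaf w : (w \in leaves (cherry i j)) = (w < 3)%N.
Proof. by rewrite leaves_cherry (perm_mem ij) !inE; lia. Qed.

Let u_not_bulk : u \notin leaves (bal_tree c k 3 (n - 3) 2^-1).
Proof. by apply/negP => /leaves_bal_tree_geq; lia. Qed.

Lemma dist_hard_tree_cherry : (v < 3)%N -> dist (hard_tree i j) u v = dist (cherry i j) u v.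
Proof. by move=> v3; apply: (dist_Node_r _ _ u_not_bulk); rewrite cherry_leaf. Qed.

Lemma dist_hard_tree_cross : (3 <= v)%N -> dist (hard_tree i j) u v = 2.
Proof.
move=> v3; rewrite (dist_Node_cross _ _ u_not_bulk) ?cherry_leaf -?leqNgt //.
by rewrite -/(hard_tree i j) !depth_hard_tree.
Qed.

End SmallLeaves.

Lemma dist_cherry12 :
  [/\ dist (cherry 1 2) 0 1 = 1 - 2 * c, dist (cherry 1 2) 1 2 = 1 & dist (cherry 1 2) 0 2 = 1].
Proof. by rewrite /cherry /=; split; lra. Qed.

Lemma dist_cherry21 :
  [/\ dist (cherry 2 1) 0 1 = 1, dist (cherry 2 1) 1 2 = 1 & dist (cherry 2 1) 0 2 = 1 - 2 * c].
Proof. by rewrite /cherry /=; split; lra. Qed.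

Definition touches_cherry (x : triple n) : bool :=
  ((val x).1.1 == 0%N :> nat) && (nat_of_ord (val x).1.2 \in [:: 1%N; 2%N]).

Lemma card_touches_cherry : (#|[pred x | touches_cherry x]| <= 2 * n)%N.
Proof.
have -> : (2 * n = #|{: bool * 'I_n}|)%N by rewrite card_prod card_bool card_ord.
apply: (@leq_card_in _ _ (fun x : triple n => (nat_of_ord (val x).1.2 == 1%N, (val x).2))).
move=> [[[a1 b1] c1] x1] [[[a2 b2] c2] x2]; rewrite !inE /touches_cherry /=.
move=> /andP[/eqP a1_0 b1_12] /andP[/eqP a2_0 b2_12] [b_eq1 c_eq]; apply: val_inj => /=.
have -> : a1 = a2 by apply: ord_inj; rewrite a1_0 a2_0.
have -> : b1 = b2 by apply: ord_inj; move: b1_12 b2_12 b_eq1; rewrite !inE; lia.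
by rewrite c_eq.
Qed.

Lemma dist_hard_trees_eq u v : (2 <= n - 3 <= 2 ^ k)%N -> (u < v < n)%N ->
  ~~ ((u == 0%N) && (v \in [:: 1%N; 2%N])) ->
  dist (hard_tree 1 2) u v = dist (hard_tree 2 1) u v.
Proof.
move=> nk uvn; rewrite !inE => not_touch; case: (ltnP u 3) => u3; last first.
  by rewrite !dist_hard_tree_bulk //; lia.
case: (ltnP v 3) => v3; last by rewrite !dist_hard_tree_cross.
have [-> ->] : u = 1%N /\ v = 2%N by lia.
rewrite !dist_hard_tree_cherry //.
by have [_ -> _] := dist_cherry12; have [_ -> _] := dist_cherry21.
Qed.

Lemma chi2_qprob_hard_trees (x : triple n) : 0 <= c -> 4 * c <= 1 ->
  (2 <= n - 3 <= 2 ^ k)%N ->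
  chi2 (qprob (hard_tree 1 2) x) (qprob (hard_tree 2 1) x) <=
  (if touches_cherry x then c ^+ 2 else 0).
Proof.
move=> c0 c4 nk; rewrite !qprobE /touches_cherry.
have abz : ((val x).1.1 < (val x).1.2 < (val x).2)%N := valP x.
have zn := ltn_ord (val x).2.
move: (nat_of_ord (val x).1.1) (nat_of_ord (val x).1.2) (nat_of_ord (val x).2) abz zn.
move=> a b z abz zn.
case: ifP => [/andP[/eqP a0 b12] | /negbT not_touch]; last first.
  have same u v : (u < v <= z)%N -> ~~ ((u == 0%N) && (v \in [:: 1%N; 2%N])) ->
      dist (hard_tree 1 2) u v = dist (hard_tree 2 1) u v.
    by move=> uvz; apply: dist_hard_trees_eq => //; lia.
  move: not_touch; rewrite !inE => not_touch.
  by rewrite !same ?chi2_id ?inE //; lia.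
rewrite a0; move: b12; rewrite !inE => /orP[] /eqP b12; rewrite b12 in abz *.
- case: (ltnP z 3) => z3.
    have -> : z = 2%N by lia.
    rewrite !dist_hard_tree_cherry //.
    have [-> -> ->] := dist_cherry12; have [-> -> ->] := dist_cherry21.
    exact: chi2_triple_law_swap.
  rewrite !(dist_hard_tree_cross (v := z)) // !dist_hard_tree_cherry //.
  have [-> _ _] := dist_cherry12; have [-> _ _] := dist_cherry21.
  exact: chi2_triple_law_shorten.
- have z3 : (3 <= z)%N by lia.
  rewrite !(dist_hard_tree_cross (v := z)) // !dist_hard_tree_cherry //.
  have [_ _ ->] := dist_cherry12; have [_ _ ->] := dist_cherry21.
  exact: chi2_triple_law_lengthen.
Qed.

Lemma sum_chi2_qprob_hard_trees : 0 <= c -> 4 * c <= 1 -> (2 <= n - 3 <= 2 ^ k)%N ->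
  \sum_(x : triple n) chi2 (qprob (hard_tree 1 2) x) (qprob (hard_tree 2 1) x) <= c ^+ 2 *+ (2 * n).
Proof.
move=> c0 c4 nk; apply: le_trans (ler_sum _ (fun x _ => chi2_qprob_hard_trees x c0 c4 nk)) _.
rewrite -big_mkcond /= sumr_const; apply: ler_wpMn2l; first exact: sqr_ge0.
exact: card_touches_cherry.
Qed.

End HardInstance.

Lemma sqr_le_exp2 k : (k ^ 2 <= 4 * 2 ^ k)%N.
Proof.
elim: k => [|k IH] //; rewrite [(2 ^ k.+1)%N]expnS.
case: (leqP 3 k) => k3; last by case: k IH k3 => [|[|[|k]]].
have : (k.+1 ^ 2 <= 2 * k ^ 2)%N by rewrite -!mulnn; nia.
move: (2 ^ k)%N (k ^ 2)%N (k.+1 ^ 2)%N IH => P K K1; lia.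
Qed.

Lemma exists_log2_bound n : (0 < n)%N -> exists k, (n <= 2 ^ k)%N /\ (k ^ 2 <= 8 * n)%N.
Proof.
move=> n0; exists (trunc_log 2 n).+1; have := sqr_le_exp2 (trunc_log 2 n).+1.
have := trunc_logP (isT : (1 < 2)%N) n0; have := trunc_log_ltn n (isT : (1 < 2)%N).
rewrite expnS; move: (2 ^ _)%N ((_).+1 ^ 2)%N => P K; lia.
Qed.

Lemma natr_le_3sqrt (R : realType) k n : (k ^ 2 <= 8 * n)%N -> k%:R <= 3 * Num.sqrt n%:R :> R.
Proof.
move=> k8; have s0 : 0 <= Num.sqrt n%:R :> R := sqrtr_ge0 _.
have : (k%:R : R) ^+ 2 <= 8 * Num.sqrt n%:R ^+ 2.
  by rewrite sqr_sqrtr ?ler0n // -natrX -natrM ler_nat.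
by have := ler0n R k; nra.
Qed.

Lemma div_sqrt_gt0_le (R : realType) (rho : R) n : 0 < rho -> (0 < n)%N ->
  0 < rho / Num.sqrt n%:R <= rho.
Proof.
move=> rho0 n0; have s1 : 1 <= Num.sqrt n%:R :> R.
  by rewrite -[X in X <= _]sqrtr1 ler_sqrt // ler1n.
have s0 : 0 < Num.sqrt n%:R :> R by apply: lt_le_trans s1.
by rewrite divr_gt0 //= ler_pdivrMr // ler_peMr // ltW.
Qed.

Section Estimates.
Variables (R : realType) (rho : R) (n k : nat).
Let c := rho / Num.sqrt n%:R.

Lemma admissible_hard_tree i j : 0 < rho <= 1 / 100 -> (5 <= n)%N ->
  (n <= 2 ^ k)%N -> (k ^ 2 <= 8 * n)%N -> perm_eq [:: 0%N; i; j] [:: 0%N; 1%N; 2%N] ->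
  admissible n rho (hard_tree c k n i j).
Proof.
move=> /andP[rho0 rho_small] n5 nk k8 ij.
have /andP[c0 c_le] : 0 < c <= rho by apply: div_sqrt_gt0_le; lia.
split; [by apply: leaves_hard_tree ij; lia | | by move=> a _; apply: depth_hard_tree; lia].
apply: weights_ge_hard_tree; [exact: ltW | lra | | lia].
have s0 : 0 < Num.sqrt n%:R :> R by rewrite sqrtr_gt0 ltr0n; lia.
rewrite /c mulrA ler_pdivrMr //.
have : k%:R * rho <= 3 * Num.sqrt n%:R * rho by rewrite ler_wpM2r ?natr_le_3sqrt // ltW.
have : Num.sqrt n%:R * rho <= Num.sqrt n%:R * (1 / 100) by rewrite ler_wpM2l // ltW.
lra.
Qed.

Lemma sum_normB_joint_hard_trees : 0 < rho <= 1 / 100 -> (5 <= n)%N ->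
  (n <= 2 ^ k)%N -> (k ^ 2 <= 8 * n)%N ->
  \sum_(w : outcome n) `|joint (hard_tree c k n 1 2) w - joint (hard_tree c k n 2 1) w|
  <= 1 / 50.
Proof.
move=> rho_bounds n5 nk k8; have /andP[rho0 rho_small] := rho_bounds.
have /andP[c0 c_le] : 0 < c <= rho by apply: div_sqrt_gt0_le; lia.
have [l1 w1 _] := admissible_hard_tree rho_bounds n5 nk k8 (perm_refl _).
have [l2 w2 _] := @admissible_hard_tree 2 1 rho_bounds n5 nk k8 isT.
have c4 : 4 * c <= 1 by lra.
have nk3 : (2 <= n - 3 <= 2 ^ k)%N by lia.
have chi_sum := sum_chi2_qprob_hard_trees (ltW c0) c4 nk3.
have c2n : c ^+ 2 *+ (2 * n) = 2 * rho ^+ 2.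
  by rewrite -mulr_natr natrM expr_div_n sqr_sqrtr ?ler0n //; field; rewrite pnatr_eq0; lia.
have [rho2 small] : 2 * rho ^+ 2 <= 2^-1 /\ 50 * (2 * rho ^+ 2) + 1 / 100 <= 1 / 50.
  by clear -rho0 rho_small; split; nra.
by rewrite c2n in chi_sum; apply: le_trans (sum_normB_joint_le c0 w1 l1 w2 l2 chi_sum rho2) _.
Qed.

End Estimates.

Theorem theorem3 (R : realType) :
  exists rho0 : R, 0 < rho0 <= 1 / 100 /\
  forall rho : R, 0 < rho <= rho0 ->
  exists N : nat, forall n : nat, (N <= n)%N ->
  exists T1 T2 : wtree R,
    [/\ admissible n rho T1, admissible n rho T2, ~ same_topo T1 T2,
        tv n T1 T2 <= 1 / 100
      & forall f : outcome n -> bool,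
          2^-1 * (prob_answer T1 f true + prob_answer T2 f false) <= 51 / 100].
Proof.
exists (1 / 100); split; first lra.
move=> rho rho_bounds; have /andP[rho0 _] := rho_bounds; exists 5%N => n n5.
have n0 : (0 < n)%N by lia.
have [k [nk k8]] := exists_log2_bound n0.
have /andP[c0 _] := div_sqrt_gt0_le rho0 n0.
set c := rho / Num.sqrt n%:R in c0 *.
have adm12 := admissible_hard_tree rho_bounds n5 nk k8 (perm_refl _).
have adm21 := @admissible_hard_tree _ _ _ _ 2 1 rho_bounds n5 nk k8 isT.
have L1 := sum_normB_joint_hard_trees rho_bounds n5 nk k8.
exists (hard_tree c k n 1 2), (hard_tree c k n 2 1); split => //.
- exact: hard_trees_topo.
- by rewrite /tv; lra.
- move=> f; have [l2 w2 _] := adm21.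
  have := sum_test_le (@joint _ (hard_tree c k n 1 2) n) (@joint _ (hard_tree c k n 2 1) n) f.
  by rewrite (sum_joint1 c0 w2 l2) /prob_answer; lra.
Qed.
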